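(* Let $(X,d)$ be a metric space and $\Phi'_n,\Phi''_n:X\to X$, $n\in\mathbb{N}$, maps such that for constants $K>0$, $\theta<1$: $\mathrm{diam}(X)\le K$ and for all $n$ and $x_1,x_2\in X$, $d(\Phi'_n(x_1),\Phi'_n(x_2))\le\theta d(x_1,x_2)$ and $d(\Phi''_n(x_1),\Phi''_n(x_2))\le\theta d(x_1,x_2)$. Suppose there are constants $C>0$, $\kappa>0$ such that $d(\Phi'_n(x),\Phi''_n(x))\le C/n^\kappa$ for all $x\in X$ and $n\in\mathbb{N}$. Then there is a constant $\bar C$ such that for all $x',x''\in X$ and $n\in\mathbb{N}$, $$d\big(\Phi'_n\circ\cdots\circ\Phi'_1(x'),\ \Phi''_n\circ\cdots\circ\Phi''_1(x'')\big)\le\frac{\bar C}{n^\kappa}.$$ *)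

From Stdlib Require Export Reals.
Open Scope R_scope.

Fixpoint comp_maps {X : Type} (Phi : nat -> X -> X) (n : nat) (x : X) : X :=
  match n with
  | O => x
  | S m => Phi (S m) (comp_maps Phi m x)
  end.

(* Write D n for the distance between the two n-fold compositions. The triangle
   inequality through Phi'_(n+1) applied to the second orbit and the contraction
   of Phi'_(n+1) give D (n+1) <= t D n + C/(n+1)^kappa with t = max(theta, 0) < 1.
   Since ((n+1)/n)^kappa tends to 1, it is at most 2/(1+t) from some N on, so the
   bound D n <= B/n^kappa propagates from n to n+1 once B >= C (1+t)/(1-t); below N
   the diameter bound K is absorbed by taking B >= K N^kappa. *)

From Stdlib Require Import Reals Lra Lia.
Open Scope R_scope.

Lemma Rpower_INR_pos (n : nat) (k : R) : 0 < Rpower (INR n) k.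
Proof. apply exp_pos. Qed.

Lemma Rpower_exp (u k : R) : Rpower (exp u) k = exp (k * u).
Proof. unfold Rpower; now rewrite ln_exp. Qed.

Lemma Rpower_INR_succ_le (m : nat) (k : R) : (1 <= m)%nat -> 0 <= k ->
  Rpower (INR (S m)) k <= exp (k * / INR m) * Rpower (INR m) k.
Proof.
  intros Hm Hk.
  assert (Hm_pos : 0 < INR m) by (apply lt_0_INR; lia).
  assert (Hinv_pos : 0 < / INR m) by (apply Rinv_0_lt_compat; lra).
  replace (INR (S m)) with ((1 + / INR m) * INR m) by (rewrite S_INR; field; lra).
  rewrite <- Rpower_mult_distr by lra.
  apply Rmult_le_compat_r; [apply Rlt_le, Rpower_INR_pos|].
  rewrite <- Rpower_exp.
  apply Rle_Rpower_l; [exact Hk|].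
  split; [lra | apply exp_ineq1_le].
Qed.

Lemma Rpower_INR_succ_ratio_eventually (q k : R) : 1 < q -> 0 <= k ->
  exists N : nat, (1 <= N)%nat /\
    forall m : nat, (N <= m)%nat -> Rpower (INR (S m)) k <= q * Rpower (INR m) k.
Proof.
  intros Hq Hk.
  assert (Hlnq : 0 < ln q) by (rewrite <- ln_1; apply ln_increasing; lra).
  destruct (archimed_cor1 (ln q / (k + 1))) as [N [HN HN_pos]].
  { apply Rdiv_lt_0_compat; lra. }
  exists N; split; [lia|].
  intros m Hm.
  assert (HN_R : 0 < INR N) by (apply lt_0_INR; lia).
  assert (Hinv_m : / INR m <= / INR N) by (apply Rinv_le_contravar; [lra | apply le_INR; lia]).
  assert (Hexponent : k * / INR m < ln q).
  { assert (HN' : (k + 1) * / INR N < ln q).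
    { apply (Rmult_lt_compat_l (k + 1)) in HN; [|lra].
      replace ((k + 1) * (ln q / (k + 1))) with (ln q) in HN by (field; lra).
      exact HN. }
    assert (0 < / INR N) by (apply Rinv_0_lt_compat; lra).
    assert (k * / INR m <= k * / INR N) by (apply Rmult_le_compat_l; lra).
    nra. }
  apply Rle_trans with (1 := Rpower_INR_succ_le m k ltac:(lia) Hk).
  apply Rmult_le_compat_r; [apply Rlt_le, Rpower_INR_pos|].
  rewrite <- (exp_ln q) by lra.
  now apply Rlt_le, exp_increasing.
Qed.

Section ContractingRecurrence.

Variables t c k K : R.
Hypotheses (Ht0 : 0 <= t) (Ht1 : t < 1) (Hk : 0 <= k) (HK : 0 <= K).

Lemma recurrence_bound_succ (q B p p' d d' : R) :
  0 <= B -> 0 <= q -> 0 < p -> 0 < p' -> p' <= q * p -> t * q * B + c <= B ->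
  d <= B / p -> d' <= t * d + c / p' -> d' <= B / p'.
Proof.
  intros HB Hq Hp Hp' Hpp' Htq Hd Hd'.
  apply (Rmult_le_reg_r p'); [exact Hp'|].
  replace (B / p' * p') with B by (field; lra).
  assert (Hdp : d * p <= B).
  { replace B with (B / p * p) by (field; lra). apply Rmult_le_compat_r; lra. }
  assert (Hrec : d' * p' <= t * (d * p') + c).
  { replace (t * (d * p') + c) with ((t * d + c / p') * p') by (field; lra).
    apply Rmult_le_compat_r; lra. }
  assert (Hshift : d * p' <= q * B).
  { destruct (Rle_or_lt 0 d) as [Hd0 | Hd0]; [|nra].
    apply Rle_trans with (d * (q * p)); [now apply Rmult_le_compat_l | nra]. }
  assert (t * (d * p') <= t * (q * B)) by (apply Rmult_le_compat_l; lra).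
  lra.
Qed.

Lemma power_decay_of_contracting_recurrence :
  exists B : R, forall D : nat -> R,
    (forall n, (1 <= n)%nat -> D n <= K) ->
    (forall n, (1 <= n)%nat -> D (S n) <= t * D n + c / Rpower (INR (S n)) k) ->
    forall n, (1 <= n)%nat -> D n <= B / Rpower (INR n) k.
Proof.
  set (q := 2 / (1 + t)).
  assert (Hq : 1 < q) by (unfold q; apply (Rmult_lt_reg_r (1 + t)); field_simplify; lra).
  destruct (Rpower_INR_succ_ratio_eventually q k Hq Hk) as [N [HN1 Hratio]].
  set (B := Rmax (K * Rpower (INR N) k) (c * (1 + t) / (1 - t))).
  assert (HB_K : K * Rpower (INR N) k <= B) by apply Rmax_l.
  assert (HB0 : 0 <= B).
  { apply Rle_trans with (2 := HB_K), Rmult_le_pos; [lra | apply Rlt_le, Rpower_INR_pos]. }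
  assert (Htq : t * q * B + c <= B).
  { assert (Hc_B : c * (1 + t) <= B * (1 - t)).
    { replace (c * (1 + t)) with (c * (1 + t) / (1 - t) * (1 - t)) by (field; lra).
      apply Rmult_le_compat_r; [lra | apply Rmax_r]. }
    apply (Rmult_le_reg_r (1 + t)); [lra|]; unfold q.
    replace ((t * (2 / (1 + t)) * B + c) * (1 + t)) with (2 * t * B + c * (1 + t))
      by (field; lra).
    lra. }
  exists B; intros D Hbound Hstep n Hn.
  induction n as [|n IH]; [lia|].
  assert (Hpow := Rpower_INR_pos (S n) k).
  destruct (Nat.le_gt_cases (S n) N) as [Hearly | Hlate].
  - assert (Rpower (INR (S n)) k <= Rpower (INR N) k).
    { apply Rle_Rpower_l; [exact Hk|]. split; [apply lt_0_INR | apply le_INR]; lia. }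
    assert (D (S n) <= K) by (apply Hbound; lia).
    apply (Rmult_le_reg_r (Rpower (INR (S n)) k)); [exact Hpow|].
    replace (B / Rpower (INR (S n)) k * Rpower (INR (S n)) k) with B by (field; lra).
    destruct (Rle_or_lt 0 (D (S n))); nra.
  - apply (recurrence_bound_succ q B (Rpower (INR n) k) _ (D n)); try lra.
    + apply Rpower_INR_pos.
    + apply Hratio; lia.
    + apply IH; lia.
    + apply Hstep; lia.
Qed.

End ContractingRecurrence.

Lemma dist_comp_maps_succ (M : Metric_Space) (Phi1 Phi2 : nat -> Base M -> Base M)
  (theta : R) (n : nat) (x' x'' : Base M) :
  (forall y z : Base M, dist M (Phi1 (S n) y) (Phi1 (S n) z) <= theta * dist M y z) ->
  dist M (comp_maps Phi1 (S n) x') (comp_maps Phi2 (S n) x'')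
  <= theta * dist M (comp_maps Phi1 n x') (comp_maps Phi2 n x'')
     + dist M (Phi1 (S n) (comp_maps Phi2 n x'')) (Phi2 (S n) (comp_maps Phi2 n x'')).
Proof.
  intros Hcontr; simpl.
  eapply Rle_trans; [apply dist_tri with (z := Phi1 (S n) (comp_maps Phi2 n x''))|].
  apply Rplus_le_compat_r, Hcontr.
Qed.

Theorem propositionC3 (M : Metric_Space)
  (Phi1 Phi2 : nat -> Base M -> Base M) (K theta C kappa : R) :
  0 < K -> theta < 1 ->
  (forall x y : Base M, dist M x y <= K) ->
  (forall (n : nat) (x1 x2 : Base M), (1 <= n)%nat ->
     dist M (Phi1 n x1) (Phi1 n x2) <= theta * dist M x1 x2) ->
  (forall (n : nat) (x1 x2 : Base M), (1 <= n)%nat ->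
     dist M (Phi2 n x1) (Phi2 n x2) <= theta * dist M x1 x2) ->
  0 < C -> 0 < kappa ->
  (forall (n : nat) (x : Base M), (1 <= n)%nat ->
     dist M (Phi1 n x) (Phi2 n x) <= C / Rpower (INR n) kappa) ->
  exists Cbar : R, forall (x' x'' : Base M) (n : nat), (1 <= n)%nat ->
    dist M (comp_maps Phi1 n x') (comp_maps Phi2 n x'') <= Cbar / Rpower (INR n) kappa.
Proof.
  intros HK Htheta Hdiam Hcontr1 _ _ Hkappa Hclose.
  set (t := Rmax theta 0).
  assert (Ht1 : t < 1) by (apply Rmax_lub_lt; lra).
  destruct (power_decay_of_contracting_recurrence t C kappa K (Rmax_r _ _) Ht1
              (Rlt_le _ _ Hkappa) (Rlt_le _ _ HK)) as [B HB].
  exists B; intros x' x'' n Hn.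
  apply (HB (fun m => dist M (comp_maps Phi1 m x') (comp_maps Phi2 m x''))); [|clear n Hn|exact Hn].
  - intros m _; apply Hdiam.
  - intros m Hm.
    eapply Rle_trans; [apply (dist_comp_maps_succ M Phi1 Phi2 theta); intros; apply Hcontr1; lia|].
    apply Rplus_le_compat; [|apply Hclose; lia].
    apply Rmult_le_compat_r; [apply Rge_le, dist_pos | apply Rmax_l].
Qed.
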